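(* Let $k$ be an algebraically closed field, $Y\subseteq k^n$ an algebraic set with radical ideal $\mathfrak a=I(Y)\subseteq P=k[X_1,\ldots,X_n]$, coordinate ring $R=P/\mathfrak a$, and $x=(x_1,\ldots,x_n)$ the coordinate functions (images of $X_i$) in $R$, regarded as acting on the $R$-module $R$. Then $\sigma_{\mathrm p}(x,R)$ equals the set $Y_{is}$ of isolated points of $Y$. If $q=(q_1,\ldots,q_m)$ are polynomials in $P$ such that $R$ is integral over $k[q(x)]$ (so $q:Y\to k^m$ is a finite morphism), then $\sigma(q(x),R)=q(Y)$ and $\sigma_{\mathrm p}(q(x),R)=q(Y_{is})$.
   Context: For a commutative $k$-algebra $R$, an $R$-module $M$ and an $n$-tuple $y$ in $R$, the Koszul complex $\operatorname{Kos}(y,M)$ is $0\leftarrow M\leftarrow M\otimes_k\wedge^1k^n\leftarrow\cdots\leftarrow M\otimes_k\wedge^nk^n\leftarrow 0$ with differential $\partial(u\otimes e_{i_1}\wedge\cdots\wedge e_{i_p})=\sum_{s=1}^p(-1)^{s+1}y_{i_s}u\otimes e_{i_1}\wedge\cdots\wedge\widehat{e_{i_s}}\wedge\cdots\wedge e_{i_p}$, with homology $H_p(y,M)$. For $a\in k^n$, $y-a=(y_1-a_1,\ldots,y_n-a_n)$. Taylor spectrum $\sigma(y,M)$: the set of $a\in k^n$ with $\operatorname{Kos}(y-a,M)$ not exact. Point spectrum $\sigma_{\mathrm p}(y,M)$: the set of $a\in k^n$ with $H_n(y-a,M)\neq0$ (joint eigenvalues). *)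

From HB Require Import structures.
From mathcomp Require Import all_boot all_order all_algebra.
From mathcomp Require Import mpoly.
Set Implicit Arguments. Unset Strict Implicit. Unset Printing Implicit Defensive.
Import Order.TTheory GRing.Theory.
Local Open Scope ring_scope.

(* A chain of Kos(y, M) is a function c : {set 'I_m} -> M, c S being the
   coefficient of e_S = e_{i_1} /\ ... /\ e_{i_p} (i_1 < ... < i_p, S = {i_1..i_p}).
   Differential: d(u e_S) = sum_{s} (-1)^{s+1} y_{i_s} u e_{S \ i_s}, so the
   coefficient of e_T in d c is  sum_{i \notin T} (-1)^{#{j in T | j < i}} y_i c(i |: T). *)
Definition kos_d (P : comPzRingType) (m : nat) (y : 'I_m -> P)
    (c : {set 'I_m} -> P) : {set 'I_m} -> P :=
  fun T => \sum_(i < m | i \notin T)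
             (-1) ^+ #|[set j in T | (j < i)%N]| * y i * c (i |: T).

(* The module M = P/I is represented by P, equality in M being congruence mod
   the ideal I (given by its membership predicate).  A chain of degree p is a
   chain supported on the p-element subsets. *)
Definition deg_chain (P : comPzRingType) (m p : nat) (c : {set 'I_m} -> P) : Prop :=
  forall S : {set 'I_m}, #|S| <> p -> c S = 0.

Definition kos_homology_nonzero (P : comPzRingType) (I : P -> Prop) (m : nat)
    (y : 'I_m -> P) (p : nat) : Prop :=
  exists c : {set 'I_m} -> P,
    [/\ deg_chain p c,
        (forall T, I (kos_d y c T)) &
        ~ exists d : {set 'I_m} -> P,
            deg_chain p.+1 d /\ forall S, I (c S - kos_d y d S)].

Definition kos_not_exact (P : comPzRingType) (I : P -> Prop) (m : nat)
    (y : 'I_m -> P) : Prop :=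
  exists p : nat, kos_homology_nonzero I y p.

Section Geom.
Variables (k : fieldType) (n : nat).

Definition algebraic_set (Z : ('I_n -> k) -> Prop) : Prop :=
  exists F : {mpoly k[n]} -> Prop,
    forall z, Z z <-> (forall f, F f -> f.@[z] = 0).

Definition vanishing_ideal (Y : ('I_n -> k) -> Prop) : {mpoly k[n]} -> Prop :=
  fun f => forall z, Y z -> f.@[z] = 0.

(* isolated point of Y (for the Zariski topology): {y} is open in Y,
   i.e. Y \ {y} is closed in Y (equivalently in k^n, Y being closed). *)
Definition isolated_point (Y : ('I_n -> k) -> Prop) (y : 'I_n -> k) : Prop :=
  Y y /\ algebraic_set (fun z => Y z /\ z <> y).
End Geom.

Definition taylor_spectrum (k : fieldType) (n m : nat) (I : {mpoly k[n]} -> Prop)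
    (y : 'I_m -> {mpoly k[n]}) (a : 'I_m -> k) : Prop :=
  kos_not_exact I (fun i => y i - (a i)%:MP).

Definition point_spectrum (k : fieldType) (n m : nat) (I : {mpoly k[n]} -> Prop)
    (y : 'I_m -> {mpoly k[n]}) (a : 'I_m -> k) : Prop :=
  kos_homology_nonzero I (fun i => y i - (a i)%:MP) m.

Definition integral_over_q (k : fieldType) (n m : nat) (I : {mpoly k[n]} -> Prop)
    (q : 'I_m -> {mpoly k[n]}) : Prop :=
  forall r : {mpoly k[n]}, exists d : nat, exists c : 'I_d -> {mpoly k[m]},
    I (r ^+ d + \sum_(i < d) (c i \mPo [tuple q j | j < m]) * r ^+ i).

Definition poly_image (k : fieldType) (n m : nat) (q : 'I_m -> {mpoly k[n]})
    (Z : ('I_n -> k) -> Prop) (w : 'I_m -> k) : Prop :=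
  exists2 y, Z y & w = (fun j => (q j).@[y]).

From Stdlib Require Import Classical FunctionalExtensionality.
From HB Require Import structures.
From mathcomp Require Import all_boot all_order all_algebra.
From mathcomp Require Import mpoly.
From mathcomp Require Import zify ring.
Import GRing.Theory.
Local Open Scope ring_scope.

(* For a linear form g, the contraction h_g satisfies
      d h_g + h_g d = sum_i y_i g_i, so Kos(y, R/I) is exact when
      1 is in I + (y).  The top homology H_m is the annihilator of y in R/I,
      and H_0 = R/(I + (y)) is nonzero when I + (y) is proper.
   2. Weak Nullstellensatz on a finite grid: an ideal of k[X] without common
      zeros that contains a split polynomial in each single variable X_j is
      the whole ring (induction on the grid, splitting off linear factors).
   3. Finiteness.  Integrality of each x_j over k[q] yields a split monic
      polynomial in X_j in the fibre ideal I(Y) + (q - b); hence the fibre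
      q^{-1}(b) lies in a finite grid and, if empty, the fibre ideal is R.
   The Taylor spectrum is then q(Y) by 1 and 2; the point spectrum is q(Y_is)
   since an annihilator of q - b is supported on the finite fibre over b,
   and an isolated point is cut out by a separating polynomial.  The
   statement about x is the special case q = x. *)

Set Implicit Arguments. Unset Strict Implicit. Unset Printing Implicit Defensive.

Section KoszulHomotopy.
Variables (R : comPzRingType) (m : nat).
Implicit Types (S T : {set 'I_m}) (y g : 'I_m -> R) (c : {set 'I_m} -> R).

(* The sign (-1)^#{j in T | j < i} by which e_i moves across e_T. *)
Definition kos_sign T (i : 'I_m) : R := (-1) ^+ #|[set j in T | (j < i)%N]|.

Definition kos_contract g c S : R :=
  \sum_(i < m | i \in S) kos_sign S i * g i * c (S :\ i).

Lemma kos_sign_setU1 T i : i \notin T -> kos_sign (i |: T) i = kos_sign T i.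
Proof.
move=> iT; rewrite /kos_sign; congr (_ ^+ _); apply: eq_card => j.
by rewrite !inE; case: eqP => //= ->; rewrite ltnn andbF.
Qed.

Lemma kos_sign_setD1 T i : kos_sign (T :\ i) i = kos_sign T i.
Proof.
rewrite /kos_sign; congr (_ ^+ _); apply: eq_card => j.
by rewrite !inE; case: eqP => //= ->; rewrite ltnn /= andbF.
Qed.

Lemma kos_sign_sqr T i : kos_sign T i * kos_sign T i = 1.
Proof. by rewrite /kos_sign -exprD addnn -mul2n exprM sqrrN !expr1n. Qed.

(* Inserting i and deleting l commute up to exactly one sign change: this
   is the anticommutation behind d h + h d being a scalar. *)
Lemma kos_sign_swap T i l : i \notin T -> l \in T ->
  kos_sign T i * kos_sign (i |: T) l = - (kos_sign T l * kos_sign (T :\ l) i).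
Proof.
move=> iT lT; have il : i != l by apply: contraNneq iT => ->.
have cardU : #|[set j in i |: T | (j < l)%N]|
           = ((i < l)%N + #|[set j in T | (j < l)%N]|)%N.
  case: (ltnP i l) => h.
    rewrite (_ : [set j in i |: T | (j < l)%N] = i |: [set j in T | (j < l)%N]).
      by rewrite cardsU1 inE (negbTE iT).
    by apply/setP=> j; rewrite !inE; case: eqP => // ->; rewrite h.
  rewrite add0n; apply: eq_card => j; rewrite !inE; case: eqP => //= ->.
  by rewrite ltnNge h andbF.
have cardD : #|[set j in T | (j < i)%N]|
           = ((l < i)%N + #|[set j in T :\ l | (j < i)%N]|)%N.
  case: (ltnP l i) => h.
    rewrite (_ : [set j in T | (j < i)%N] = l |: [set j in T :\ l | (j < i)%N]).
      by rewrite cardsU1 !inE eqxx.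
    by apply/setP=> j; rewrite !inE; case: eqP => [->|] //=; rewrite lT h.
  rewrite add0n; apply: eq_card => j; rewrite !inE; case: eqP => //= ->.
  by rewrite lT ltnNge h.
have oppX e : - ((-1) ^+ e : R) = (-1) ^+ e.+1 by rewrite exprS mulN1r.
rewrite /kos_sign cardU cardD -!exprD oppX; congr (_ ^+ _).
case: (ltngtP i l) il => [||h] /=; try lia.
by move=> /eqP; case; apply: val_inj.
Qed.

Lemma kos_homotopy y g c T :
  kos_d y (kos_contract g c) T + kos_contract g (kos_d y c) T
  = (\sum_i y i * g i) * c T.
Proof.
rewrite /kos_d /kos_contract.
have insert i : i \notin T ->
  kos_sign T i * y i *
    (\sum_(l < m | l \in i |: T) kos_sign (i |: T) l * g l * c ((i |: T) :\ l))
  = y i * g i * c T + \sum_(l < m | l \in T)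
      kos_sign T i * kos_sign (i |: T) l * y i * g l * c (i |: (T :\ l)).
  move=> iT; rewrite (bigD1 i) ?setU11 //= mulrDr; congr (_ + _).
    by rewrite kos_sign_setU1 // setU1K // -[RHS]mul1r -(kos_sign_sqr T i); ring.
  rewrite mulr_sumr; apply: eq_big => l.
    by rewrite in_setU1; case: eqP => [->|] /=; rewrite ?(negbTE iT) ?andbT ?andbF.
  move=> /andP [lT li]; rewrite (_ : (i |: T) :\ l = i |: (T :\ l)); first by ring.
  by apply/setP=> j; rewrite !inE; case: (eqVneq j i) => [->|] //=; rewrite eq_sym li.
have delete l : l \in T ->
  kos_sign T l * g l *
    (\sum_(i < m | i \notin T :\ l) kos_sign (T :\ l) i * y i * c (i |: (T :\ l)))
  = y l * g l * c T + \sum_(i < m | i \notin T)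
      kos_sign T l * kos_sign (T :\ l) i * y i * g l * c (i |: (T :\ l)).
  move=> lT; rewrite (bigD1 l) ?setD11 //= mulrDr; congr (_ + _).
    by rewrite kos_sign_setD1 setD1K // -[RHS]mul1r -(kos_sign_sqr T l); ring.
  rewrite mulr_sumr; apply: eq_big => [i|i _]; last by ring.
  by rewrite in_setD1; case: eqP => [->|] /=; rewrite ?lT ?andbT ?andbF.
rewrite (eq_bigr _ insert) (eq_bigr _ delete) !big_split /= addrACA.
have -> : \sum_(i < m | i \notin T) \sum_(l < m | l \in T)
            kos_sign T i * kos_sign (i |: T) l * y i * g l * c (i |: (T :\ l))
        + \sum_(l < m | l \in T) \sum_(i < m | i \notin T)
            kos_sign T l * kos_sign (T :\ l) i * y i * g l * c (i |: (T :\ l)) = 0.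
  rewrite (exchange_big_dep (fun j => j \in T)) //= -big_split big1 // => l lT.
  rewrite (eq_bigl (fun i => i \notin T)) => [|i]; last by rewrite lT andbT.
  rewrite -big_split big1 // => i iT.
  by rewrite /= kos_sign_swap // !mulNr addrC subrr.
rewrite /= addr0 (bigID (fun i => i \in T) predT) /= mulrDl !mulr_suml addrC.
by congr (_ + _); apply: eq_bigr => i _; rewrite mulrA.
Qed.

Lemma kos_contract_deg p g c : deg_chain p c -> deg_chain p.+1 (kos_contract g c).
Proof.
move=> degc S hS; rewrite /kos_contract big1 // => i iS.
by rewrite degc ?mulr0 // => e; apply: hS; rewrite (cardsD1 i) iS e.
Qed.

End KoszulHomotopy.
Arguments kos_sign {R m} T i.
Arguments kos_sign_sqr {R m} T i.

Section Ideals.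
Variable R : comPzRingType.
Implicit Types (I J : R -> Prop) (f g : R).

Definition is_ideal I :=
  [/\ I 0, forall f g, I f -> I g -> I (f + g) & forall a f, I f -> I (a * f)].

Section IdealFacts.
Variables (I : R -> Prop) (idI : is_ideal I).

Lemma ideal_zero : I 0. Proof. by case: idI. Qed.
Lemma ideal_add f g : I f -> I g -> I (f + g). Proof. by case: idI => _ + _; apply. Qed.
Lemma ideal_mull a f : I f -> I (a * f). Proof. by case: idI => _ _; apply. Qed.
Lemma ideal_mulr a f : I f -> I (f * a). Proof. by rewrite mulrC; apply: ideal_mull. Qed.
Lemma ideal_opp f : I f -> I (- f). Proof. by rewrite -mulN1r; apply: ideal_mull. Qed.
Lemma ideal_sub f g : I f -> I g -> I (f - g).
Proof. by move=> If Ig; apply: ideal_add => //; apply: ideal_opp. Qed.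

Lemma ideal_sum (T : finType) (P : pred T) (F : T -> R) :
  (forall i, P i -> I (F i)) -> I (\sum_(i | P i) F i).
Proof. by apply: (big_ind I); [apply: ideal_zero | apply: ideal_add]. Qed.

End IdealFacts.

Definition ideal_span I m (y : 'I_m -> R) f : Prop :=
  exists g : 'I_m -> R, I (f - \sum_i y i * g i).

Section Span.
Variables (I : R -> Prop) (idI : is_ideal I) (m : nat) (y : 'I_m -> R).

Lemma ideal_span_ideal : is_ideal (ideal_span I y).
Proof.
split.
- exists (fun=> 0); rewrite big1 => [|i _]; last by rewrite mulr0.
  by rewrite subr0; apply: ideal_zero.
- move=> f f' [g Ig] [g' Ig']; exists (fun i => g i + g' i).
  rewrite (eq_bigr (fun i => y i * g i + y i * g' i)) => [|i _]; last by rewrite mulrDr.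
  rewrite big_split /= opprD addrACA; exact: ideal_add.
- move=> a f [g Ig]; exists (fun i => a * g i).
  rewrite (eq_bigr (fun i => a * (y i * g i))) => [|i _]; last by ring.
  by rewrite -mulr_sumr -mulrBr; apply: ideal_mull.
Qed.

Lemma ideal_span_sub f : I f -> ideal_span I y f.
Proof.
by move=> If; exists (fun=> 0); rewrite big1 ?subr0 // => i _; rewrite mulr0.
Qed.

Lemma ideal_span_gen l : ideal_span I y (y l).
Proof.
exists (fun i => (i == l)%:R); rewrite (bigD1 l) //= eqxx mulr1 big1 ?addr0.
  by rewrite subrr; apply: ideal_zero.
by move=> i /negbTE ->; rewrite mulr0.
Qed.

End Span.

Lemma ideal_coprime_factors I (A B : R) : is_ideal I -> I (A * B) ->
  ideal_span I (fun _ : 'I_1 => A) 1 -> ideal_span I (fun _ : 'I_1 => B) 1 -> I 1.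
Proof.
move=> idI IAB [a]; rewrite big_ord1 => Ia [b]; rewrite big_ord1 => Ib.
have -> : 1 = (1 - A * a ord0) * 1 + (A * a ord0) * (1 - B * b ord0)
              + (a ord0 * b ord0) * (A * B) by ring.
apply: (ideal_add idI); last exact: (ideal_mull idI).
by apply: (ideal_add idI); [apply: (ideal_mulr idI) | apply: (ideal_mull idI)].
Qed.

End Ideals.

Lemma card_eq_setT (m : nat) (S : {set 'I_m}) : (#|S| == m) = (S == setT).
Proof.
have := max_card S; rewrite card_ord => leSm.
by rewrite eqEcard subsetT cardsT card_ord /= eqn_leq leSm.
Qed.

Section KoszulModuloIdeal.
Variables (R : comPzRingType) (I : R -> Prop) (idI : is_ideal I).
Variables (m : nat) (y : 'I_m -> R).

(* If 1 lies in I + (y), then Kos(y, R/I) is exact: the contraction by a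
   witness g is a contracting homotopy modulo I. *)
Lemma kos_exact_of_span_unit : ideal_span I y 1 -> ~ kos_not_exact I y.
Proof.
move=> [g Ig] [p [c [degc cyc nb]]]; apply: nb.
exists (kos_contract g c); split; first exact: kos_contract_deg.
move=> S; have -> : c S - kos_d y (kos_contract g c) S
    = (1 - \sum_i y i * g i) * c S + kos_contract g (kos_d y c) S.
  by rewrite mulrBl mul1r -(kos_homotopy y g c S); ring.
apply: (ideal_add idI); first exact: (ideal_mulr idI).
by apply: (ideal_sum idI) => i _; apply: (ideal_mull idI).
Qed.

Lemma kos_top_homology :
  kos_homology_nonzero I y m <-> exists u, ~ I u /\ forall i, I (y i * u).
Proof.
split.
- case=> c [degc cyc nb]; exists (c setT); split.
  + move=> Iu; apply: nb; exists (fun=> 0); split=> // S.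
    rewrite /kos_d big1 ?subr0 => [|i _]; last by rewrite mulr0.
    case: (eqVneq S setT) => [->|nS] //; rewrite degc; first exact: ideal_zero.
    by apply/eqP; rewrite card_eq_setT.
  + move=> i; have := cyc (setT :\ i); rewrite /kos_d.
    rewrite (bigD1 i) ?inE ?eqxx //= big1 ?addr0 => [|l /andP [lT li]]; last first.
      by move: lT; rewrite !inE li.
    rewrite setD1K ?inE // => /(ideal_mull idI (kos_sign (setT :\ i) i)).
    by rewrite !mulrA kos_sign_sqr mul1r.
- case=> u [Iu yu]; exists (fun S => if S == setT then u else 0); split.
  + by move=> S /eqP; rewrite card_eq_setT => /negbTE ->.
  + move=> T; apply: ideal_sum => // i _.
    case: ifP => _; last by rewrite mulr0; apply: ideal_zero.
    by rewrite -mulrA; apply: (ideal_mull idI).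
  + case=> d [degd hd]; apply: Iu; move: (hd setT); rewrite eqxx /kos_d big1 ?subr0 //.
    move=> i _; rewrite degd ?mulr0 // => e.
    by have := max_card (i |: setT); rewrite e card_ord ltnn.
Qed.

Lemma kos_bottom_homology (J : R -> Prop) : is_ideal J ->
  (forall f, I f -> J f) -> ~ J 1 -> (forall i, J (y i)) ->
  kos_homology_nonzero I y 0.
Proof.
move=> idJ IJ J1 Jy; exists (fun S => (S == set0)%:R); split.
- by move=> S /eqP; rewrite cards_eq0 => /negbTE ->.
- move=> T; apply: ideal_sum => // i _.
  rewrite (_ : (i |: T == set0) = false) ?mulr0; first exact: ideal_zero.
  by apply/negbTE/set0Pn; exists i; rewrite setU11.
- case=> d [_ hd]; apply: J1.
  have J1d : J (1 - kos_d y d set0) by have := IJ _ (hd set0); rewrite eqxx.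
  have Jd : J (kos_d y d set0).
    by apply: (ideal_sum idJ) => i _; apply: (ideal_mulr idJ); apply: (ideal_mull idJ).
  by have := ideal_add idJ J1d Jd; rewrite subrK.
Qed.

End KoszulModuloIdeal.

Lemma ideal_eval_congr (R : comNzRingType) (n : nat) (I : {mpoly R[n]} -> Prop)
    (s : 'I_n -> R) :
  is_ideal I -> (forall j, I ('X_j - (s j)%:MP)) -> forall f, I (f - (f.@[s])%:MP).
Proof.
move=> idI IX.
pose congr_to (f : {mpoly R[n]}) (e : R) := I (f - e%:MP).
have mul_congr f a g b : congr_to f a -> congr_to g b -> congr_to (f * g) (a * b).
  rewrite /congr_to => Ifa Igb.
  have -> : f * g - (a * b)%:MP = (f - a%:MP) * g + a%:MP * (g - b%:MP).
    by rewrite mpolyCM; ring.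
  by apply: (ideal_add idI); [apply: (ideal_mulr idI) | apply: (ideal_mull idI)].
have one_congr : congr_to 1 1 by rewrite /congr_to mpolyC1 subrr; apply: ideal_zero.
move=> f; elim/mpolyind: f => [|c mu p _ _ IHp].
  by rewrite meval0 mpolyC0 subrr; apply: ideal_zero.
rewrite mevalD mevalZ mpolyCD mpolyCM.
have -> : c *: 'X_[mu] + p - (c%:MP * ('X_[mu]).@[s]%:MP + (p.@[s])%:MP)
        = c%:MP * ('X_[mu] - (('X_[mu]).@[s])%:MP) + (p - (p.@[s])%:MP).
  by rewrite -mul_mpolyC; ring.
apply: (ideal_add idI) IHp; apply: (ideal_mull idI).
rewrite mevalX mpolyXE_id; apply: (big_ind2 congr_to one_congr mul_congr) => i _.
by elim: (mu i) => [|e IHe]; rewrite ?expr0 // !exprS; apply: mul_congr.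
Qed.

Section WeakNullstellensatz.
Variables (k : fieldType) (n : nat).
Local Notation mp := {mpoly k[n]}.
Implicit Types (K : mp -> Prop) (rs : 'I_n -> seq k).

Definition grid_size rs := (\sum_j size (rs j))%N.

Lemma grid_size_shrink rs j (s : seq k) : (size s < size (rs j))%N ->
  (grid_size (fun l => if l == j then s else rs l) < grid_size rs)%N.
Proof.
move=> lt_s; rewrite /grid_size (bigD1 j) //= [X in (_ < X)%N](bigD1 j) //= eqxx.
by rewrite (eq_bigr (fun i => size (rs i))) ?ltn_add2r // => i /negbTE ->.
Qed.

Lemma ideal_point_unit K s f : is_ideal K ->
  (forall j, K ('X_j - (s j)%:MP)) -> K f -> f.@[s] != 0 -> K 1.
Proof.
move=> idK KX Kf fs.
have Kfs : K (f.@[s])%:MP.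
  rewrite -[_%:MP](subKr f); apply: (ideal_sub idK) Kf _.
  exact: ideal_eval_congr.
have -> : 1 = ((f.@[s])^-1)%:MP * (f.@[s])%:MP :> mp.
  by rewrite -mpolyCM mulVf // mpolyC1.
exact: (ideal_mull idK).
Qed.

(* Induction on the grid: split a factor off, or reduce to single points. *)
Lemma weak_nullstellensatz_grid K rs : is_ideal K ->
  (forall s, exists2 f, K f & f.@[s] != 0) ->
  (forall j, K (\prod_(r <- rs j) ('X_j - r%:MP))) -> K 1.
Proof.
move: {2}(grid_size rs) (leqnn (grid_size rs)) => N.
elim/ltn_ind: N K rs => N IH K rs le_rs_N idK nozero Kaxis.
case: (pickP (fun j => 1 < size (rs j))%N) => [j|small].
  case E: (rs j) => [|r rs'] //= lt1.
  have shrink (A : mp) (s : seq k) : (size s < size (rs j))%N ->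
      A = \prod_(r <- s) ('X_j - r%:MP) -> ideal_span K (fun _ : 'I_1 => A) 1.
    move=> lt_s eA; pose rs_s l := if l == j then s else rs l.
    apply: (IH _ (leq_trans (grid_size_shrink lt_s) le_rs_N) _ rs_s (leqnn _)).
    - exact: ideal_span_ideal.
    - by move=> z; have [f Kf fz] := nozero z; exists f => //; apply: ideal_span_sub.
    - move=> l; rewrite /rs_s; case: eqP => [->|_]; last exact: ideal_span_sub.
      by rewrite -eA; apply: ideal_span_gen ord0.
  apply: (ideal_coprime_factors idK (A := 'X_j - r%:MP)
                                    (B := \prod_(r <- rs') ('X_j - r%:MP))).
  - by have := Kaxis j; rewrite E big_cons.
  - by apply: (shrink _ [:: r]); rewrite ?E // big_seq1.
  - by apply: (shrink _ rs'); rewrite ?E.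
case: (pickP (fun j => rs j == [::])) => [j /eqP E|nonempty].
  by have := Kaxis j; rewrite E big_nil.
pose s j := head 0 (rs j).
have Es j : rs j = [:: s j].
  by have := small j; have := nonempty j; rewrite /s; case: (rs j) => [|? []].
have [f Kf fs] := nozero s.
by apply: (ideal_point_unit idK _ Kf fs) => j; have := Kaxis j; rewrite Es big_seq1.
Qed.

End WeakNullstellensatz.

Lemma monic_split (k : closedFieldType) (d : nat) (a : 'I_d -> k) :
  exists rs : seq k,
    forall t, \prod_(r <- rs) (t - r) = t ^+ d + \sum_(i < d) a i * t ^+ i.
Proof.
pose p : {poly k} := 'X^d + \poly_(i < d) (if insub i is Some j then a j else 0).
have lc : lead_coef p = 1.
  by rewrite /p lead_coefDl ?lead_coefXn // size_polyXn ltnS size_poly.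
have [rs Ers] := closed_field_poly_normal p.
exists rs => t; have := congr1 (horner^~ t) Ers.
rewrite /= lc scale1r horner_prod => eval_p.
rewrite (eq_bigr (fun r => ('X - r%:P).[t])) => [|r _]; last by rewrite hornerXsubC.
rewrite -eval_p /p hornerD hornerXn horner_poly; congr (_ + _).
by apply: eq_bigr => i _; rewrite valK.
Qed.

Lemma vanishing_ideal_ideal (k : fieldType) (n : nat) (Y : ('I_n -> k) -> Prop) :
  is_ideal (vanishing_ideal Y).
Proof.
split=> [z _|f g If Ig z Yz|a f If z Yz]; first by rewrite meval0.
  by rewrite mevalD If ?Ig ?addr0.
by rewrite mevalM If ?mulr0.
Qed.

Section Geometry.
Variables (k : fieldType) (n : nat) (Y : ('I_n -> k) -> Prop).
Local Notation VI := (vanishing_ideal Y).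
Local Notation mp := {mpoly k[n]}.

Lemma nonvanishing_point u : ~ VI u -> exists2 z, Y z & u.@[z] != 0.
Proof.
move=> nVu; apply: NNPP => nz; apply: nVu => z Yz.
by apply: NNPP => uz; apply: nz; exists z => //; apply/eqP.
Qed.

Lemma isolated_point_separator z0 : isolated_point Y z0 ->
  exists2 u : mp, u.@[z0] != 0 & forall z, Y z -> z <> z0 -> u.@[z] = 0.
Proof.
case=> Yz0 [F defY']; have [f Ff fz0] : exists2 f, F f & f.@[z0] != 0.
  apply: NNPP => h; have [_ /(_ erefl)//] : Y z0 /\ z0 <> z0.
  by apply/defY' => f Ff; apply: NNPP => fz0; apply: h; exists f => //; apply/eqP.
by exists f => // z Yz nz; apply: (proj1 (defY' z)).
Qed.

(* Conversely, if the locus of Y where u does not vanish is contained in a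
   finite grid, every point of this locus is isolated in Y: remove the
   other grid values one coordinate at a time. *)
Lemma isolated_of_finite_locus u z0 (rs : 'I_n -> seq k) :
  algebraic_set Y -> Y z0 -> u.@[z0] != 0 ->
  (forall z, Y z -> u.@[z] != 0 -> forall j, z j \in rs j) ->
  isolated_point Y z0.
Proof.
move=> [F defY] Yz0 uz0 grid; split => //.
pose g : mp := u * \prod_j \prod_(r <- rs j | r != z0 j) ('X_j - r%:MP).
have gE z : g.@[z] = u.@[z] * \prod_j \prod_(r <- rs j | r != z0 j) (z j - r).
  rewrite mevalM rmorph_prod; congr (_ * _); apply: eq_bigr => j _.
  by rewrite rmorph_prod; apply: eq_bigr => r _; rewrite rmorphB /= mevalXU mevalC.
exists (fun f => F f \/ f = g) => z; split.
- case=> Yz nz f [Ff|->]; first exact: (proj1 (defY z)).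
  rewrite gE; have [->|uz] := eqVneq u.@[z] 0; first by rewrite mul0r.
  have [j zj] : exists j, z j <> z0 j.
    apply: NNPP => h; apply: nz; apply: functional_extensionality => j.
    by apply: NNPP => zj; apply: h; exists j.
  apply/eqP; rewrite mulf_eq0; apply/orP; right; apply/prodf_eq0; exists j => //.
  rewrite prodf_seq_eq0; apply/hasP; exists (z j); first exact: grid.
  by rewrite subrr eqxx andbT; apply/eqP.
- move=> vanish; have Yz : Y z by apply/defY => f Ff; apply: vanish; left.
  split => // ez; move: (vanish g (or_intror erefl)); rewrite ez gE; apply/eqP.
  rewrite mulf_neq0 //; apply/prodf_neq0 => j _; rewrite prodf_seq_neq0.
  by apply/allP => r _; apply/implyP; rewrite subr_eq0 eq_sym.
Qed.

(* A point of Y where y - b vanishes gives a nonzero class in H_0. *)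
Lemma taylor_spectrum_of_image m (y : 'I_m -> mp) z0 :
  Y z0 -> taylor_spectrum VI y (fun i => (y i).@[z0]).
Proof.
move=> Yz0; exists 0%N.
apply: (kos_bottom_homology (vanishing_ideal_ideal Y)
          (vanishing_ideal_ideal (eq^~ z0))).
- by move=> f Vf z ->; apply: Vf.
- by move=> V1; have := V1 z0 erefl; rewrite meval1; apply/eqP; apply: oner_neq0.
- by move=> i z ->; rewrite mevalB mevalC subrr.
Qed.

Lemma point_spectrum_annihilator m (y : 'I_m -> mp) b :
  point_spectrum VI y b <->
  exists u, ~ VI u /\ forall i, VI ((y i - (b i)%:MP) * u).
Proof. exact: (kos_top_homology (vanishing_ideal_ideal Y)). Qed.

(* At an isolated point z0 the separator u is annihilated by y - y(z0). *)
Lemma point_spectrum_of_isolated m (y : 'I_m -> mp) z0 :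
  isolated_point Y z0 -> point_spectrum VI y (fun i => (y i).@[z0]).
Proof.
move=> iso; have [u uz0 u_out] := isolated_point_separator iso.
apply/point_spectrum_annihilator; exists u; split.
  by move=> Vu; move: uz0; rewrite (Vu z0 iso.1) eqxx.
move=> i z Yz; rewrite mevalM; have [->|nz] := classic (z = z0).
  by rewrite mevalB mevalC subrr mul0r.
by rewrite u_out ?mulr0.
Qed.

End Geometry.

Lemma meval_comp (R : comNzRingType) (n m : nat) (q : 'I_m -> {mpoly R[n]})
    (c : {mpoly R[m]}) (z : 'I_n -> R) :
  (c \mPo [tuple q j | j < m]).@[z] = c.@[fun l => (q l).@[z]].
Proof. by rewrite comp_mpoly_meval; apply: meval_eq => l; rewrite tnth_mktuple. Qed.

Section FiniteMap.
Variables (k : closedFieldType) (n m : nat) (Y : ('I_n -> k) -> Prop).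
Variables (q : 'I_m -> {mpoly k[n]}) (b : 'I_m -> k).
Local Notation VI := (vanishing_ideal Y).
Local Notation mp := {mpoly k[n]}.

Local Notation fibre_ideal := (ideal_span VI (fun i => q i - (b i)%:MP)).

Let idVI : is_ideal VI := vanishing_ideal_ideal Y.
Let idFib : is_ideal fibre_ideal := ideal_span_ideal idVI _.

Lemma fibre_ideal_comp (c : {mpoly k[m]}) :
  fibre_ideal ((c \mPo [tuple q j | j < m]) - (c.@[b])%:MP).
Proof.
pose J (h : {mpoly k[m]}) := fibre_ideal (h \mPo [tuple q j | j < m]).
have idJ : is_ideal J.
  split=> [|f g Jf Jg|a f Jf]; rewrite /J ?comp_mpoly0 ?comp_mpolyD ?rmorphM.
  - exact: ideal_zero.
  - exact: ideal_add.
  - exact: ideal_mull.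
have JX l : J ('X_l - (b l)%:MP).
  rewrite /J comp_mpolyB comp_mpolyXU comp_mpolyC -tnth_nth tnth_mktuple.
  exact: ideal_span_gen.
by have := ideal_eval_congr idJ JX c; rewrite /J comp_mpolyB comp_mpolyC.
Qed.

Hypothesis intq : integral_over_q VI q.

(* Integrality of x_j over k[q] confines the j-th coordinate of the fibre
   q^{-1}(b) to the finitely many roots of a monic polynomial, whose split
   form lies in the fibre ideal. *)
Lemma fibre_axis_roots j : exists rs : seq k,
  (forall z, Y z -> (forall i, (q i).@[z] = b i) -> z j \in rs) /\
  fibre_ideal (\prod_(r <- rs) ('X_j - r%:MP)).
Proof.
have [d [c int_j]] := intq 'X_j.
have [rs split_rs] := monic_split (fun i => (c i).@[b]).
have evalE (z : 'I_n -> k) : (forall i, (q i).@[z] = b i) ->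
    ('X_j ^+ d + \sum_(i < d) (c i \mPo [tuple q j | j < m]) * 'X_j ^+ i).@[z]
    = \prod_(r <- rs) (z j - r).
  move=> qz; rewrite split_rs mevalD rmorphXn /= mevalXU rmorph_sum /=; congr (_ + _).
  apply: eq_bigr => i _; rewrite rmorphM rmorphXn /= mevalXU meval_comp.
  by congr (_ * _); apply: meval_eq.
exists rs; split.
  move=> z Yz qz; have := int_j z Yz; rewrite evalE // => /eqP.
  by rewrite prodf_seq_eq0 => /hasP [r r_rs /andP [_]]; rewrite subr_eq0 => /eqP ->.
pose p : mp := 'X_j ^+ d + \sum_(i < d) ((c i).@[b])%:MP * 'X_j ^+ i.
have fib_p : fibre_ideal p.
  have -> : p = ('X_j ^+ d + \sum_(i < d) (c i \mPo [tuple q j | j < m]) * 'X_j ^+ i)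
      - \sum_(i < d) ((c i \mPo [tuple q j | j < m]) - ((c i).@[b])%:MP) * 'X_j ^+ i.
    by rewrite (eq_bigr _ (fun i _ => mulrBl _ _ _)) sumrB /p; ring.
  apply: (ideal_sub idFib); first exact: ideal_span_sub.
  by apply: (ideal_sum idFib) => i _; apply: (ideal_mulr idFib); apply: fibre_ideal_comp.
rewrite -(subrK p (\prod_(r <- rs) ('X_j - r%:MP))); apply: (ideal_add idFib) fib_p.
apply: ideal_span_sub => z _.
rewrite mevalB rmorph_prod /= (eq_bigr (fun r => z j - r)); last first.
  by move=> r _; rewrite mevalB mevalXU mevalC.
apply/eqP; rewrite subr_eq0 split_rs mevalD rmorphXn /= mevalXU rmorph_sum /=.
apply/eqP.
by congr (_ + _); apply: eq_bigr => i _; rewrite mevalM rmorphXn /= mevalXU mevalC.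
Qed.

Lemma fibre_ideal_unit : algebraic_set Y -> ~ poly_image q Y b -> fibre_ideal 1.
Proof.
move=> [F defY] b_out; have [rs axis_rs] := fin_all_exists fibre_axis_roots.
apply: (weak_nullstellensatz_grid idFib _ (fun j => (axis_rs j).2)) => s.
have [Ys|Y's] := classic (Y s).
  have [i qi] : exists i, (q i).@[s] <> b i.
    apply: NNPP => h; apply: b_out; exists s => //.
    apply: functional_extensionality => i; apply: NNPP => qi; apply: h.
    by exists i => e; apply: qi.
  exists (q i - (b i)%:MP); first exact: ideal_span_gen.
  by rewrite mevalB mevalC subr_eq0; apply/eqP.
have [f Ff fs] : exists2 f, F f & f.@[s] != 0.
  apply: NNPP => h; apply: Y's; apply/defY => f Ff.
  by apply: NNPP => fs; apply: h; exists f => //; apply/eqP.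
by exists f => //; apply: ideal_span_sub => z /defY; apply.
Qed.

(* Outside q(Y) the Koszul complex of q - b is exact, by the homotopy. *)
Lemma image_of_taylor_spectrum : algebraic_set Y ->
  taylor_spectrum VI q b -> poly_image q Y b.
Proof.
move=> algY spec; apply: NNPP => b_out.
have [g Vg] := fibre_ideal_unit algY b_out.
exact: (kos_exact_of_span_unit idVI) (ex_intro _ g Vg) spec.
Qed.

(* A point of the point spectrum is the image of an isolated point: the
   annihilating u is nonzero only on the finite fibre over b. *)
Lemma isolated_of_point_spectrum : algebraic_set Y ->
  point_spectrum VI q b -> poly_image q (isolated_point Y) b.
Proof.
move=> algY /point_spectrum_annihilator [u [Vu ann]].
have [z0 Yz0 uz0] := nonvanishing_point Vu.
have fibre z : Y z -> u.@[z] != 0 -> forall i, (q i).@[z] = b i.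
  move=> Yz uz i; have /eqP := ann i z Yz.
  by rewrite mevalM mulf_eq0 (negbTE uz) orbF mevalB mevalC subr_eq0 => /eqP.
have [rs axis_rs] := fin_all_exists fibre_axis_roots.
exists z0; last by apply: functional_extensionality => i; rewrite fibre.
apply: (isolated_of_finite_locus (rs := rs) algY Yz0 uz0) => z Yz uz j.
exact: (axis_rs j).1 z Yz (fibre z Yz uz).
Qed.

End FiniteMap.

Lemma integral_over_coordinates (k : fieldType) (n : nat) (I : {mpoly k[n]} -> Prop) :
  is_ideal I -> integral_over_q I (fun i : 'I_n => 'X_i).
Proof.
move=> idI r; exists 1%N, (fun=> - r).
by rewrite big_ord1 comp_mpoly_id expr1 expr0 mulr1 subrr; apply: ideal_zero.
Qed.

Lemma poly_image_coordinates (k : fieldType) (n : nat) (Z : ('I_n -> k) -> Prop) a :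
  poly_image (fun i : 'I_n => 'X_i) Z a <-> Z a.
Proof.
have evalX (z : 'I_n -> k) : (fun j => ('X_j : {mpoly k[n]}).@[z]) = z.
  by apply: functional_extensionality => j; rewrite mevalXU.
by split=> [[z Zz ->]|Za]; [rewrite evalX | exists a; rewrite ?evalX].
Qed.

Theorem corollary3p9 (k : closedFieldType) (n : nat) (Y : ('I_n -> k) -> Prop) :
  algebraic_set Y ->
  (forall a : 'I_n -> k,
     point_spectrum (vanishing_ideal Y) (fun i : 'I_n => 'X_i) a
     <-> isolated_point Y a) /\
  (forall (m : nat) (q : 'I_m -> {mpoly k[n]}),
     integral_over_q (vanishing_ideal Y) q ->
     (forall b : 'I_m -> k,
        taylor_spectrum (vanishing_ideal Y) q b <-> poly_image q Y b) /\
     (forall b : 'I_m -> k,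
        point_spectrum (vanishing_ideal Y) q b
        <-> poly_image q (isolated_point Y) b)).
Proof.
move=> algY.
have point_spec m (q : 'I_m -> {mpoly k[n]}) b :
    integral_over_q (vanishing_ideal Y) q ->
    point_spectrum (vanishing_ideal Y) q b <-> poly_image q (isolated_point Y) b.
  move=> intq; split; first exact: isolated_of_point_spectrum.
  by case=> z0 iso ->; apply: point_spectrum_of_isolated.
split=> [a|m q intq].
  apply: iff_trans (poly_image_coordinates _ a); apply: point_spec.
  exact/integral_over_coordinates/vanishing_ideal_ideal.
split=> b; last exact: point_spec.
split; first exact: image_of_taylor_spectrum.
by case=> z0 Yz0 ->; apply: taylor_spectrum_of_image.
Qed.
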